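(* Let $R$ be a commutative principal ideal domain which is not a field and has at most countably many primes (up to associates), and let $K$ be its field of fractions. Let $(M_\alpha,\varphi_{\alpha\beta})$ be an inverse system, indexed by a countable upward directed poset, of injective $R$-modules and surjective homomorphisms, with inverse limit $M$. Then for every index $\alpha$, the submodule of $M$ spanned by the images of all $R$-module homomorphisms $K\to M$ maps surjectively onto $M_\alpha$ under the canonical projection $M\to M_\alpha$.
   Context: Rings are associative with unit, modules are unital. *)

From HB Require Import structures.
From mathcomp Require Import all_boot all_order all_algebra fraction.
Set Implicit Arguments. Unset Strict Implicit. Unset Printing Implicit Defensive.
Import Order.TTheory GRing.Theory Num.Theory.
Local Open Scope ring_scope.

Definition rdivides (R : comNzRingType) (a b : R) : Prop := exists c : R, b = c * a.

Definition is_ideal (R : comNzRingType) (P : R -> Prop) : Prop :=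
  [/\ P 0, (forall x y, P x -> P y -> P (x + y)) & (forall r x, P x -> P (r * x))].

Definition is_PID (R : idomainType) : Prop :=
  forall P : R -> Prop, is_ideal P -> exists a : R, forall x, P x <-> rdivides a x.

Definition is_field_ring (R : idomainType) : Prop :=
  forall x : R, x != 0 -> x \is a GRing.unit.

Definition is_prime_elt (R : idomainType) (p : R) : Prop :=
  [/\ p != 0, p \isn't a GRing.unit &
      forall a b : R, rdivides p (a * b) -> rdivides p a \/ rdivides p b].

Definition associated (R : idomainType) (p q : R) : Prop :=
  exists2 u : R, u \is a GRing.unit & p = u * q.

Definition countably_many_primes (R : idomainType) : Prop :=
  exists f : nat -> R, forall p : R, is_prime_elt p -> exists n, associated p (f n).

(* injective R-module: every R-linear map from a submodule (given by an injective
   linear map) extends *)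
Definition injective_module (R : idomainType) (E : lmodType R) : Prop :=
  forall (A B : lmodType R) (i : {linear A -> B}) (f : {linear A -> E}),
    injective i -> exists g : {linear B -> E}, forall a, g (i a) = f a.

(* R-linear maps out of the fraction field K = {fraction R}, where R acts on K
   through the embedding r |-> r%:F *)
Definition Rlinear_from_frac (R : idomainType) (V : lmodType R)
  (g : {fraction R} -> V) : Prop :=
  (forall x y, g (x + y) = g x + g y) /\
  (forall (r : R) x, g (@FracField.tofrac R r * x) = r *: g x).

Definition Rlinear (R : idomainType) (V W : lmodType R) (g : V -> W) : Prop :=
  (forall x y, g (x + y) = g x + g y) /\ (forall (r : R) x, g (r *: x) = r *: g x).

(* inverse system over the poset I (with order <=), of modules M a with maps
   phi a b : M b -> M a for a <= b *)
Definition inverse_system (R : idomainType) (d : Order.disp_t) (I : porderType d)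
  (M : I -> lmodType R) (phi : forall a b : I, M b -> M a) : Prop :=
  [/\ forall a b, (a <= b)%O -> Rlinear (phi a b),
      forall a (x : M a), phi a a x = x &
      forall a b c (x : M c), (a <= b)%O -> (b <= c)%O -> phi a b (phi b c x) = phi a c x].

(* elements of the inverse limit: compatible threads *)
Definition thread (R : idomainType) (d : Order.disp_t) (I : porderType d)
  (M : I -> lmodType R) (phi : forall a b : I, M b -> M a) (x : forall a, M a) : Prop :=
  forall a b, (a <= b)%O -> phi a b (x b) = x a.

(* R-homomorphisms K -> lim M: maps into the product of the M a, landing in the
   threads, R-linear in each coordinate *)
Definition hom_frac_to_limit (R : idomainType) (d : Order.disp_t) (I : porderType d)
  (M : I -> lmodType R) (phi : forall a b : I, M b -> M a)
  (f : {fraction R} -> forall a, M a) : Prop :=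
  (forall k, thread phi (f k)) /\ (forall a, Rlinear_from_frac (fun k => f k a)).

From HB Require Import structures.
From mathcomp Require Import all_boot all_order all_algebra fraction generic_quotient.
From Stdlib Require Import ClassicalEpsilon Classical.
Import Order.TTheory GRing.Theory Num.Theory.
Set Implicit Arguments. Unset Strict Implicit. Unset Printing Implicit Defensive.
Local Open Scope ring_scope.

(* We show that every m in M_alpha is
   the alpha-component of the image of 1 under a single R-linear map from the
   fraction field K to the inverse limit.

   1. Arithmetic: in a PID every nonzero element is a product of a unit and
      primes (pid_mul_closed).  Hence, with primorial n = p_0 * ... * p_n,
      every nonzero element divides some den n = primorial 0 * ... *
      primorial (n-1) (primorial_den_cofinal): every fraction is r / den n.
   2. Fractions: in any R-module V, a sequence Z with Z_n = u_n Z_(n+1)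
      gives an R-linear map K -> V sending r / den n to r Z_n (frac_ext).
   3. Limits: a countable directed poset has a cofinal chain ch; injective
      modules are divisible, so m lifts to elements w_k of M_(ch k) with
      w_k = u_k phi(w_(k+1)) (divided_lift).  These define threads Z_n of the
      inverse limit with Z_n = u_n Z_(n+1) and with alpha-component of Z_0
      equal to m (thread_at).  Step 2, applied in each coordinate, yields the
      required map. *)

Lemma dependent_choice (T : nat -> Type) (step : forall k, T k -> T k.+1 -> Prop) :
  (forall k (x : T k), exists y, step k x y) ->
  forall x0 : T 0, exists x : forall k, T k, x 0 = x0 /\ forall k, step k (x k) (x k.+1).
Proof.
move=> hstep x0.
pose next k (y : T k) := proj1_sig (constructive_indefinite_description _ (hstep k y)).
pose x := fix x k : T k := match k return T k with 0 => x0 | k'.+1 => next k' (x k') end.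
exists x; split => // k.
exact: proj2_sig (constructive_indefinite_description _ (hstep k (x k))).
Qed.

Section Divisibility.
Variable R : idomainType.
Implicit Types a b c e : R.

Lemma rdivides_refl a : rdivides a a.
Proof. by exists 1; rewrite mul1r. Qed.

Lemma rdivides_trans a b c : rdivides a b -> rdivides b c -> rdivides a c.
Proof. by move=> [x ->] [y ->]; exists (y * x); rewrite mulrA. Qed.

Lemma rdivides_mull a b c : rdivides a b -> rdivides a (c * b).
Proof. by move=> [x ->]; exists (c * x); rewrite mulrA. Qed.

Lemma rdivides_mul a b c e : rdivides a b -> rdivides c e -> rdivides (a * c) (b * e).
Proof. by move=> [x ->] [y ->]; exists (x * y); rewrite mulrACA. Qed.

Lemma rdivides_unit a b : a \is a GRing.unit -> rdivides a b.
Proof. by move=> ua; exists (b / a); rewrite divrK. Qed.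

Lemma rdivides_mulUr a b e : e \is a GRing.unit -> rdivides a (b * e) -> rdivides a b.
Proof.
move=> ue abe; apply: rdivides_trans abe _; exists e^-1.
by rewrite mulrCA mulVr ?mulr1.
Qed.

Hypothesis hPID : is_PID R.

(* Bezout: two elements of a PID have a common divisor which is a linear
   combination of them (a generator of the ideal they span). *)
Lemma pid_bezout a b :
  exists d x y, [/\ d = x * a + y * b, rdivides d a & rdivides d b].
Proof.
pose P z := exists x y, z = x * a + y * b.
have idealP : is_ideal P.
  split; first by exists 0, 0; rewrite !mul0r addr0.
    move=> z z' [x [y ->]] [x' [y' ->]]; exists (x + x'), (y + y').
    by rewrite !mulrDl addrACA.
  by move=> r z [x [y ->]]; exists (r * x), (r * y); rewrite mulrDr !mulrA.
have [d hd] := hPID idealP.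
have [x [y dxy]] : P d by apply/hd/rdivides_refl.
exists d, x, y; split => //; apply/hd.
  by exists 1, 0; rewrite mul1r mul0r addr0.
by exists 0, 1; rewrite mul1r mul0r add0r.
Qed.

Lemma pid_nonprime_factor b :
  b != 0 -> b \isn't a GRing.unit -> ~ is_prime_elt b ->
  exists e c, [/\ b = e * c, e \isn't a GRing.unit & c \isn't a GRing.unit].
Proof.
move=> b0 bNU bNP.
have [a [c [bac [bNa bNc]]]] :
    exists a c, rdivides b (a * c) /\ ~ rdivides b a /\ ~ rdivides b c.
  apply: NNPP => hn; apply: bNP; split => // a c bac.
  apply: NNPP => hac; apply: hn; exists a, c.
  by split => //; split => h; apply: hac; [left | right].
have [g [x [y [gxy [h bhg] ga]]]] := pid_bezout b a.
exists h, g; split => //; apply/negP => hU.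
  by apply: bNa; apply: rdivides_trans ga; exists h^-1; rewrite bhg mulrA mulVr ?mul1r.
apply: bNc; apply: rdivides_mulUr hU _.
have [z abz] := bac; exists (c * x + y * z).
by rewrite gxy mulrDr mulrDl mulrA mulrCA [c * a]mulrC abz mulrA.
Qed.

(* Principal ideals satisfy the ascending chain condition: there is no
   infinite chain of nonzero elements, each a proper multiple of the next. *)
Lemma pid_no_infinite_descent (c : nat -> R) :
  (forall k, c k != 0) ->
  ~ (forall k, exists2 e, c k = e * c k.+1 & e \isn't a GRing.unit).
Proof.
move=> c0 hc.
have cdiv k l : rdivides (c (k + l)%N) (c k).
  elim: l => [|l IH]; first by rewrite addn0; apply: rdivides_refl.
  apply: rdivides_trans IH; have [e he _] := hc (k + l)%N.
  by rewrite addnS he; exists e.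
pose P x := exists k, rdivides (c k) x.
have idealP : is_ideal P.
  split; first by exists 0%N, 0; rewrite mul0r.
    move=> x y [k [x1 ->]] [l [y1 ->]]; exists (k + l)%N.
    have [z1 ->] := cdiv k l; have [z2 ->] := cdiv l k.
    by rewrite addnC; exists (x1 * z1 + y1 * z2); rewrite mulrDl !mulrA.
  by move=> r x [k hk]; exists k; apply: rdivides_mull.
have [a ha] := hPID idealP.
have [k cka] : P a by apply/ha/rdivides_refl.
have [z hz] : rdivides (c k) (c k.+1).
  by apply: rdivides_trans cka _; apply/ha; exists k.+1; apply: rdivides_refl.
have [e he eNU] := hc k.
move: hz; rewrite he mulrA -{1}[c k.+1]mul1r => /(mulIf (c0 k.+1)) /esym ze.
by move/negP: eNU; apply; apply/unitrPr; exists z; rewrite mulrC.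
Qed.

Lemma pid_mul_closed (S : R -> Prop) :
  (forall a b, S a -> S b -> S (a * b)) ->
  (forall a, a \is a GRing.unit -> S a) -> (forall p, is_prime_elt p -> S p) ->
  forall b, b != 0 -> S b.
Proof.
move=> SM SU SP b b0; apply: NNPP => bNS.
pose bad x := x != 0 /\ ~ S x.
have split_bad (x : {x | bad x}) :
    exists y : {y | bad y}, exists2 e, sval x = e * sval y & e \isn't a GRing.unit.
  case: x => x [x0 xNS] /=.
  have xNU : x \isn't a GRing.unit by apply/negP => /SU.
  have xNP : ~ is_prime_elt x by move/SP.
  have [e [y [xey eNU yNU]]] := pid_nonprime_factor x0 xNU xNP.
  have /norP [e0 y0] : ~~ ((e == 0) || (y == 0)) by rewrite -mulf_eq0 -xey.
  case: (classic (S y)) => Sy.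
    have eNS : ~ S e by move=> Se; apply: xNS; rewrite xey; exact: SM.
    by exists (exist bad e (conj e0 eNS)), y; rewrite //= mulrC.
  by exists (exist bad y (conj y0 Sy)), e.
have [x [_ hx]] := dependent_choice (fun _ => split_bad) (exist bad b (conj b0 bNS)).
apply: (@pid_no_infinite_descent (fun k => sval (x k))) => [k|k].
  by case: (x k) => ? [].
exact: hx.
Qed.

End Divisibility.

Section PrimeDenominators.
Variables (R : idomainType) (f : nat -> R).

Definition listed_prime i : R := if f i == 0 then 1 else f i.

(* primorial n = p_0 * ... * p_n; the denominators used below are the
   products primorial 0 * ... * primorial (n - 1), in which p_i occurs
   with multiplicity n - i. *)
Definition primorial n : R := \prod_(0 <= i < n.+1) listed_prime i.

Lemma primorial_neq0 n : primorial n != 0.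
Proof.
apply: (big_ind (fun x : R => x != 0)) => [|x y|i _]; first exact: oner_neq0.
  exact: mulf_neq0.
by rewrite /listed_prime; case: ifPn => // _; exact: oner_neq0.
Qed.

Lemma primorial_dvd m n : (m <= n)%N -> rdivides (primorial m) (primorial n).
Proof.
move=> mn; rewrite /primorial [X in rdivides _ X](@big_cat_nat _ _ _ m.+1) //=.
by exists (\prod_(m.+1 <= i < n.+1) listed_prime i); rewrite mulrC.
Qed.

Lemma primorial_den_mul n m :
  rdivides ((\prod_(0 <= k < n) primorial k) * \prod_(0 <= k < m) primorial k)
           (\prod_(0 <= k < n + m) primorial k).
Proof.
rewrite (@big_cat_nat _ _ _ n 0 (n + m)) ?leq_addr //=.
apply: rdivides_mul; first exact: rdivides_refl.
rewrite -{1}[n]add0n big_addn addKn.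
apply: (big_ind2 (@rdivides R)) => [|a b a' b'|k _]; first exact: rdivides_refl.
  exact: rdivides_mul.
by apply: primorial_dvd; rewrite leq_addr.
Qed.

Hypothesis hPID : is_PID R.
Hypothesis hprimes : forall p : R, is_prime_elt p -> exists n, associated p (f n).

Lemma primorial_den_cofinal b :
  b != 0 -> exists n, rdivides b (\prod_(0 <= k < n) primorial k).
Proof.
pose S x := exists n, rdivides x (\prod_(0 <= k < n) primorial k).
apply: (@pid_mul_closed _ hPID S) => [a c [n an] [m cm] | a aU | p pP].
- exists (n + m)%N; apply: rdivides_trans (primorial_den_mul n m).
  exact: rdivides_mul.
- by exists 0%N; apply: rdivides_unit.
have [i [w wU pwf]] := hprimes pP.
have fi0 : f i != 0.
  by case: pP => + _ _; rewrite pwf; apply: contraNneq => ->; rewrite mulr0.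
exists i.+1; rewrite big_nat_recr //=; apply: rdivides_mull.
apply: (@rdivides_trans _ _ (f i)); first by exists w^-1; rewrite pwf mulKr.
rewrite /primorial big_nat_recr //= /listed_prime (negbTE fi0).
by apply: rdivides_mull; exact: rdivides_refl.
Qed.

End PrimeDenominators.

Local Notation tf := (@FracField.tofrac _).

Lemma frac_repr (R : idomainType) (x : {fraction R}) :
  exists a b : R, b != 0 /\ x = tf a / tf b.
Proof.
elim/quotW: x => r; exists (frac r).1, (frac r).2; split; first exact: denom_ratioP.
have d0 : (frac r).2 != 0 := denom_ratioP r.
apply: (@mulIf _ (tf (frac r).2)); first by rewrite tofrac_eq0.
rewrite divfK ?tofrac_eq0 //; unlock FracField.tofrac.
rewrite -[_ * _]/(FracField.mul _ _) piE /= /FracField.mulf /=.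
apply/eqmodP; rewrite /= FracField.equivfE /= !numden_Ratio ?mulf_neq0 ?oner_neq0 //.
by rewrite !mulr1 mulrC.
Qed.

(* If every nonzero element
   divides some den n = u_0 * ... * u_(n-1), then every fraction is r / den n,
   and a sequence Z with Z n = u_n Z_(n+1) (a compatible choice of
   "Z_0 / den n") extends to an R-linear map K -> V sending r / den n to
   r Z_n. *)
Section FractionExtension.
Variables (R : idomainType) (u : nat -> R).
Hypothesis u_neq0 : forall n, u n != 0.
Hypothesis den_cofinal :
  forall b, b != 0 -> exists n, rdivides b (\prod_(0 <= k < n) u k).

Local Notation den n := (\prod_(0 <= k < n) u k).

Lemma segment_neq0 m n : \prod_(m <= k < n) u k != 0.
Proof.
apply: (big_ind (fun x : R => x != 0)) => //; first exact: oner_neq0.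
exact: mulf_neq0.
Qed.

Lemma frac_scale (a b c : R) : c != 0 -> tf (a * c) / tf (b * c) = tf a / tf b.
Proof. by move=> c0; rewrite !tofracM invfM mulrACA divff ?mulr1 // tofrac_eq0. Qed.

Lemma frac_raise (r : R) n n' : (n <= n')%N ->
  tf r / tf (den n) = tf (r * \prod_(n <= k < n') u k) / tf (den n').
Proof.
by move=> nn'; rewrite (big_cat_nat (leq0n n) nn') /= frac_scale ?segment_neq0.
Qed.

Lemma frac_den (x : {fraction R}) : exists p : nat * R, x = tf p.2 / tf (den p.1).
Proof.
have [a [b [b0 ->]]] := frac_repr x.
have [n [c hc]] := den_cofinal b0.
have c0 : c != 0.
  by move: (segment_neq0 0 n); rewrite hc; apply: contraNneq => ->; rewrite mul0r.
by exists (n, a * c); rewrite /= hc [c * b]mulrC frac_scale.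
Qed.

Lemma frac_common_den (x y : {fraction R}) :
  exists n a b, x = tf a / tf (den n) /\ y = tf b / tf (den n).
Proof.
have [[n1 r1] /= ->] := frac_den x; have [[n2 r2] /= ->] := frac_den y.
exists (n1 + n2)%N, (r1 * \prod_(n1 <= k < n1 + n2) u k),
  (r2 * \prod_(n2 <= k < n1 + n2) u k).
by rewrite -!frac_raise ?leq_addr ?leq_addl.
Qed.

Definition frac_rep (x : {fraction R}) : nat * R :=
  proj1_sig (constructive_indefinite_description _ (frac_den x)).

Lemma frac_repE x : x = tf (frac_rep x).2 / tf (den (frac_rep x).1).
Proof. exact: proj2_sig (constructive_indefinite_description _ (frac_den x)). Qed.

Definition frac_ext (V : lmodType R) (Z : nat -> V) (x : {fraction R}) : V :=
  (frac_rep x).2 *: Z (frac_rep x).1.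

Lemma frac_ext_comp (V W : lmodType R) (g : V -> W) (Z : nat -> V) (Z' : nat -> W) :
  (forall (r : R) v, g (r *: v) = r *: g v) -> (forall n, g (Z n) = Z' n) ->
  forall x, g (frac_ext Z x) = frac_ext Z' x.
Proof. by move=> gZ gZZ' x; rewrite /frac_ext gZ gZZ'. Qed.

Variables (V : lmodType R) (Z : nat -> V).
Hypothesis Z_div : forall n, Z n = u n *: Z n.+1.

Lemma Z_segment m n : (m <= n)%N -> Z m = (\prod_(m <= k < n) u k) *: Z n.
Proof.
move=> mn; rewrite -(subnKC mn); elim: (n - m)%N => [|e IH].
  by rewrite addn0 big_geq // scale1r.
by rewrite addnS big_nat_recr ?leq_addr //= -scalerA -Z_div.
Qed.

Lemma frac_ext_wd (r r' : R) n n' :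
  tf r / tf (den n) = tf r' / tf (den n') -> r *: Z n = r' *: Z n'.
Proof.
wlog nn' : n n' r r' / (n <= n')%N.
  move=> H E; case: (leqP n n') => [|/ltnW] le; first exact: H.
  by symmetry; apply: H.
rewrite (frac_raise r nn') => /(congr1 ( *%R^~ (tf (den n')))).
rewrite !divfK ?tofrac_eq0 ?segment_neq0 // => /eqP; rewrite tofrac_eq => /eqP <-.
by rewrite -scalerA -Z_segment.
Qed.

Lemma frac_ext_spec (r : R) n x : x = tf r / tf (den n) -> frac_ext Z x = r *: Z n.
Proof. by move=> xE; apply: frac_ext_wd; rewrite -frac_repE. Qed.

(* The extension is R-linear: additivity by passing to a common denominator. *)
Lemma frac_ext_linear : Rlinear_from_frac (frac_ext Z).
Proof.
split=> [x y | c x].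
  have [n [a [b [xE yE]]]] := frac_common_den x y.
  have xyE : x + y = tf (a + b) / tf (den n) by rewrite xE yE tofracD mulrDl.
  by rewrite (frac_ext_spec xyE) (frac_ext_spec xE) (frac_ext_spec yE) scalerDl.
have cxE : tf c * x = tf (c * (frac_rep x).2) / tf (den (frac_rep x).1).
  by rewrite {1}[x]frac_repE tofracM mulrA.
by rewrite (frac_ext_spec cxE) /frac_ext scalerA.
Qed.

End FractionExtension.

Lemma countable_directed_chain d (I : porderType d) (alpha : I) :
  (exists g : I -> nat, injective g) ->
  (forall a b : I, exists c, (a <= c)%O /\ (b <= c)%O) ->
  exists (ch : nat -> I) (reach : I -> nat),
    [/\ (alpha <= ch 0%N)%O, {homo ch : j k / (j <= k)%N >-> (j <= k)%O}
      & forall b, (b <= ch (reach b))%O].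
Proof.
move=> [g g_inj] hdir.
pose ub a b := proj1_sig (constructive_indefinite_description _ (hdir a b)).
have ubP a b : (a <= ub a b)%O /\ (b <= ub a b)%O.
  exact: proj2_sig (constructive_indefinite_description _ (hdir a b)).
pose el k := epsilon (inhabits alpha) (fun b => g b = k).
have elK b : el (g b) = b.
  by apply: g_inj; apply: (epsilon_spec (inhabits alpha) (fun x => g x = g b)); exists b.
pose ch := fix ch k := if k is k'.+1 then ub (ch k') (el k') else alpha.
exists ch, (fun b => (g b).+1); split => [//||b].
  apply: (@homo_leq _ ch (fun x y => (x <= y)%O)) => [x|y x z|i]; first exact: lexx.
    exact: le_trans.
  exact: (ubP _ _).1.
by rewrite /= -{1}(elK b); exact: (ubP _ _).2.
Qed.

Definition scale_onto (R : idomainType) (V : lmodType R) (y : V) : R^o -> V :=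
  fun r => r *: y.

Fact scale_onto_linear (R : idomainType) (V : lmodType R) (y : V) : linear (scale_onto y).
Proof. by move=> a r s; rewrite /scale_onto scalerDl scalerA. Qed.

HB.instance Definition _ (R : idomainType) (V : lmodType R) (y : V) :=
  GRing.isLinear.Build R R^o V *:%R (scale_onto y) (scale_onto_linear y).

(* Injective modules over a domain are divisible: extend r s |-> r y along the
   injective map r |-> r s. *)
Lemma injective_module_divisible (R : idomainType) (E : lmodType R) :
  injective_module E -> forall s : R, s != 0 -> forall y : E, exists x : E, s *: x = y.
Proof.
move=> hE s s0 y.
have [h hh] := hE _ _ ( *:%R s : {linear R^o -> R^o}) (scale_onto y) (mulfI s0).
by exists (h 1); rewrite -linearZ -[RHS]scale1r -[X in _ = X]hh.
Qed.

Section ChainThreads.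
Variables (R : idomainType) (d : Order.disp_t) (I : porderType d).
Variables (M : I -> lmodType R) (phi : forall a b : I, M b -> M a).
Arguments phi : clear implicits.
Hypothesis hsys : inverse_system phi.

Lemma phiZ a b (r : R) (x : M b) : (a <= b)%O -> phi a b (r *: x) = r *: phi a b x.
Proof. by case: hsys => hlin _ _ /hlin []. Qed.

Lemma phi_comp a b c (x : M c) :
  (a <= b)%O -> (b <= c)%O -> phi a b (phi b c x) = phi a c x.
Proof. by case: hsys => _ _; apply. Qed.

Variables (ch : nat -> I) (u : nat -> R).
Hypothesis ch_mono : {homo ch : j k / (j <= k)%N >-> (j <= k)%O}.

Lemma divided_lift (alpha : I) (m : M alpha) :
  (alpha <= ch 0%N)%O ->
  (forall a b, (a <= b)%O -> forall y : M a, exists x : M b, phi a b x = y) ->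
  (forall k (y : M (ch k)), exists x, u k *: x = y) ->
  exists w : forall k, M (ch k), phi alpha (ch 0%N) (w 0%N) = m /\
    forall k, u k *: phi (ch k) (ch k.+1) (w k.+1) = w k.
Proof.
move=> alpha_ch hsurj hdiv.
have [w0 w0m] := hsurj _ _ alpha_ch m.
have step k (y : M (ch k)) : exists x, u k *: phi (ch k) (ch k.+1) x = y.
  have [z <-] := hdiv k y; have [x <-] := hsurj _ _ (ch_mono (leqnSn k)) z.
  by exists x.
have [w [w0E hw]] := dependent_choice step w0.
by exists w; rewrite w0E.
Qed.

Variables (reach : I -> nat) (w : forall k, M (ch k)).
Hypothesis reach_le : forall b, (b <= ch (reach b))%O.
Hypothesis hw : forall k, u k *: phi (ch k) (ch k.+1) (w k.+1) = w k.

(* The candidate value at b of "w_n / (u_n ... u_(k-1))", read at level k. *)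
Definition level n b k : M b := (\prod_(n <= i < k) u i) *: phi b (ch k) (w k).

Lemma level_succ n b k : (n <= k)%N -> (b <= ch k)%O -> level n b k = level n b k.+1.
Proof.
move=> nk bk; have kk1 := ch_mono (leqnSn k).
rewrite /level big_nat_recr //= -[in LHS]hw phiZ // phi_comp //.
by rewrite scalerA.
Qed.

Lemma level_stable n b k k' :
  (n <= k)%N -> (k <= k')%N -> (b <= ch k)%O -> level n b k = level n b k'.
Proof.
move=> nk + bk; elim: k' => [|k' IH]; first by rewrite leqn0 => /eqP ->.
rewrite leq_eqVlt ltnS => /orP [/eqP -> // | kk'].
rewrite IH // level_succ //; first exact: leq_trans nk kk'.
exact: le_trans bk (ch_mono kk').
Qed.

(* The b-component of the thread Z_n ("m / den n"): its level at any large k. *)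
Definition thread_at n b : M b := level n b (maxn n (reach b)).

Lemma thread_atE n b k : (n <= k)%N -> (b <= ch k)%O -> thread_at n b = level n b k.
Proof.
move=> nk bk; pose K := maxn n (reach b).
have bK : (b <= ch K)%O := le_trans (reach_le b) (ch_mono (leq_maxr _ _)).
rewrite /thread_at -/K (@level_stable n b K (maxn k K)) ?leq_maxl ?leq_maxr //.
by rewrite (@level_stable n b k (maxn k K)) ?leq_maxl.
Qed.

Lemma thread_at_thread n : thread phi (thread_at n).
Proof.
move=> b c bc; set k := maxn n (reach c).
have ck : (c <= ch k)%O := le_trans (reach_le c) (ch_mono (leq_maxr _ _)).
have bk : (b <= ch k)%O := le_trans bc ck.
rewrite (@thread_atE n c k) ?leq_maxl // (@thread_atE n b k) ?leq_maxl //.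
by rewrite /level phiZ // phi_comp.
Qed.

Lemma thread_at_div n b : thread_at n b = u n *: thread_at n.+1 b.
Proof.
set k := maxn n.+1 (reach b).
have bk : (b <= ch k)%O := le_trans (reach_le b) (ch_mono (leq_maxr _ _)).
have nk : (n.+1 <= k)%N := leq_maxl _ _.
by rewrite !(@thread_atE _ b k) ?(ltnW nk) // /level big_ltn // scalerA.
Qed.

Lemma thread_at_start b : (b <= ch 0%N)%O -> thread_at 0 b = phi b (ch 0%N) (w 0%N).
Proof. by move=> b0; rewrite (@thread_atE 0 b 0) // /level big_geq // scale1r. Qed.

End ChainThreads.

Local Unset Implicit Arguments.

Theorem mainTheorem8 (R : idomainType)
  (hPID : is_PID R) (hnf : ~ is_field_ring R) (hprimes : countably_many_primes R)
  (d : Order.disp_t) (I : porderType d)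
  (hIcount : exists g : I -> nat, injective g)
  (hIdir : forall a b : I, exists c : I, (a <= c)%O /\ (b <= c)%O)
  (M : I -> lmodType R) (phi : forall a b : I, M b -> M a)
  (hsys : inverse_system phi)
  (hinj : forall a, injective_module (M a))
  (hsurj : forall a b, (a <= b)%O -> forall y : M a, exists x : M b, phi a b x = y) :
  forall (alpha : I) (m : M alpha),
    exists (n : nat) (fs : 'I_n -> {fraction R} -> forall a, M a)
           (ks : 'I_n -> {fraction R}),
      (forall i, hom_frac_to_limit phi (fs i)) /\
      \sum_(i < n) fs i (ks i) alpha = m.
Proof.
move=> alpha m.
have [f hf] := hprimes.
pose u := primorial f.
have den_cof := primorial_den_cofinal hPID hf.
have [ch [reach [alpha_ch ch_mono reach_le]]] :=
  countable_directed_chain alpha hIcount hIdir.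
have hdiv k (y : M (ch k)) : exists x, u k *: x = y :=
  injective_module_divisible (hinj (ch k)) (primorial_neq0 f k) y.
have [w [w0 hw]] := divided_lift ch_mono m alpha_ch hsurj hdiv.
pose Z n b := thread_at phi u reach w n b.
have Z_thread n : thread phi (Z n) := thread_at_thread hsys ch_mono reach_le hw n.
have Z_div b n : Z n b = u n *: Z n.+1 b := thread_at_div hsys ch_mono reach_le hw n b.
pose F x b := frac_ext (primorial_neq0 f) den_cof (fun n => Z n b) x.
exists 1%N, (fun _ => F), (fun _ => 1); split => [_|].
  split => [x b c bc | b]; last exact: frac_ext_linear (Z_div b).
  apply: frac_ext_comp => [r v | n]; first exact: phiZ.
  exact: Z_thread.
have one_den : (1 : {fraction R}) = tf 1 / tf (\prod_(0 <= k < 0) u k).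
  by rewrite big_geq // divr1.
rewrite big_ord1 /F (frac_ext_spec _ _ (Z_div alpha) one_den) scale1r.
by rewrite /Z (thread_at_start hsys ch_mono reach_le hw alpha_ch).
Qed.
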